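(* Let $\mathcal{A}$ be a bounded PTA with clock set $X$, initial symbolic state $s_0$, and $T\subseteq L$ a set of target locations. Let $\vec M=(M(x))_{x\in X}$ with $M(x)=\mathrm{maxC}^x(\mathcal{A})$ for every clock $x$, and $\Phi=\mathrm{Ext}^X_{\vec M}$. Assume $\mathrm{EEF}_\Phi(\mathcal{A},s_0,T,\emptyset)$ terminates, with output $K$. Then (1) Soundness: for all $\nu\in K$, $T$ is reachable in $\nu(\mathcal{A})$; (2) Completeness: for every parameter valuation $\nu$ within the parameter domain, if $T$ is reachable in $\nu(\mathcal{A})$ then $\nu\in K$.
   Context: Clocks $X=\{x_1,\dots,x_H\}$ are real-valued variables; parameters $P=\{p_1,\dots,p_M\}$. A clock valuation is $v: X\to\mathbb{R}_{\ge 0}$, a parameter valuation is $\nu:P\to\mathbb{Q}$; $v+d$ adds $d$ to every clock; $v[R:=0]$ resets the clocks of $R$ to $0$. Linear constraints over $X\cup P$ (conjunctions of integer-coefficient linear inequalities) are identified with sets of valuations. A simple clock guard is $x \bowtie \sum_i \alpha_i p_i + z$ with $\alpha_i, z\in\mathbb{Z}$, ${\bowtie}\in\{<,\le,=,\ge,>\}$; a clock guard is a conjunction of simple clock guards. A PTA is $\mathcal{A}=(\Sigma,L,l_0,L_F,X,P,\mathbb{D},I,E)$: finite actions, finite locations $L$, initial $l_0$, accepting $L_F$, parameter domain $\mathbb{D}(p)=(\mathbb{D}^-(p),\mathbb{D}^+(p))\in(\mathbb{Q}\cup\{-\infty\})\times(\mathbb{Q}\cup\{+\infty\})$ with admissible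 values $[\mathbb{D}^-(p),\mathbb{D}^+(p)]$, invariants $I(l)$ (clock guards), edges $(l,g,a,R,l')$. $\mathcal{A}$ is bounded if all $\mathbb{D}^\pm(p)$ are finite. $G^x(\mathcal{A})$: simple clock guards among conjuncts of guards/invariants in which $x$ appears. $\nu(\mathcal{A})$: timed automaton obtained by substituting $\nu(p)$ for each $p$, with states $(l,v)$ satisfying $\nu(I(l))$, initial state $(l_0,\vec0)$, delay transitions (all intermediate states valid) and discrete transitions along edges whose guard $\nu(g)$ holds, resetting $R$. A run is an alternating sequence of states and (delay, edge) pairs from the initial state; $T$ is reachable in $\nu(\mathcal{A})$ if some run visits a location of $T$. Symbolic semantics: $C^{\nearrow}=\{(v+d,\nu)\mid(v,\nu)\in C,d\ge0\}$; $[C]_R$ resets clocks in $R$; $C\downarrow_P$ projection onto $P$. Symbolic state: $(l,C)$. $s_0=(l_0,(\bigwedge_ix_i=0)^{\nearrow}\wedge I(l_0)\wedge\bigwedge_j\mathbb{D}^-(p_j)\le p_j\le\mathbb{D}^+(p_j))$. For $e=(l,g,a,R,l')$, $\mathrm{Succ}((l,C),e)=(l',([C\wedge g]_R\wedge I(l'))^{\nearrow}\wedge I(l'))$, defined when nonempty. Extrapolation: $\mathrm{Cyl}_x(C)=\{w\mid\exists w'\in C,\ w'(y)=w(y)\ \forall y\ne x,\ w(x)\ge0\}$; $\mathrm{Ext}^x_M(C)=(C\cap(x\le M))\cup(\mathrm{Cyl}_x(C\cap(x>M))\cap(x>M))$; for $\vec M=(M(x))_{x\in X'}$, $\mathrm{Ext}^{X'}_{\vec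 M}$ is the composition of all $\mathrm{Ext}^x_{M(x)}$, $x\in X'$, acting on the constraint of a symbolic state. Maximal constant: for $g: x\bowtie\sum_i\alpha_ip_i+z$, $\mathrm{maxC}(g)=\sum_i\alpha_i\gamma_i+z$, $\gamma_i=\mathbb{D}^-(p_i)$ if $\alpha_i<0$, $\mathbb{D}^+(p_i)$ if $\alpha_i>0$, $0$ otherwise; $\mathrm{maxC}^x(\mathcal{A})=\max_{g\in G^x(\mathcal{A})}\mathrm{maxC}(g)$. Algorithm $\mathrm{EEF}_\Phi(\mathcal{A},s,T,\mathit{Pass})$ with $s=(l,C)$: if $l\in T$ return $C\downarrow_P$; else $K:=\emptyset$ and, if $s\notin\mathit{Pass}$, for each edge $e$ from $l$ with $\mathrm{Succ}(s,e)$ defined, $K:=K\cup\mathrm{EEF}_\Phi(\mathcal{A},\Phi(\mathrm{Succ}(s,e)),T,\mathit{Pass}\cup\{s\})$; return $K$. *)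

From HB Require Import structures.
From mathcomp Require Import all_boot all_order all_algebra.
From mathcomp Require Import reals.
From Stdlib Require List.

Set Implicit Arguments.
Unset Strict Implicit.
Unset Printing Implicit Defensive.

Import Order.TTheory GRing.Theory Num.Theory.
Local Open Scope ring_scope.

Inductive cmp := CLt | CLe | CEq | CGe | CGt.

Record sguard (H Mp : nat) := SGuard {
  sg_clock : 'I_H;
  sg_op : cmp;
  sg_coef : 'I_Mp -> int;
  sg_const : int }.

Definition guard (H Mp : nat) := seq (sguard H Mp).

Record edge (H Mp : nat) (Act Loc : Type) := Edge {
  e_src : Loc;
  e_guard : guard H Mp;
  e_act : Act;
  e_reset : {set 'I_H};
  e_dst : Loc }.

(* PTA (Sigma, L, l0, L_F, X = 'I_H, P = 'I_Mp, D, I, E).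
   Domain bounds: None in p_Dlo stands for -oo, None in p_Dhi for +oo. *)
Record pta (H Mp : nat) (Act Loc : finType) := PTA {
  p_l0 : Loc;
  p_LF : {set Loc};
  p_Dlo : 'I_Mp -> option rat;
  p_Dhi : 'I_Mp -> option rat;
  p_inv : Loc -> guard H Mp;
  p_edges : seq (edge H Mp Act Loc) }.

Definition bounded H Mp Act Loc (A : pta H Mp Act Loc) : Prop :=
  forall p, p_Dlo A p <> None /\ p_Dhi A p <> None.

Definition admissible H Mp Act Loc (A : pta H Mp Act Loc) (nu : 'I_Mp -> rat)
  : Prop :=
  forall p,
    (match p_Dlo A p with Some q => q <= nu p | None => True end) /\
    (match p_Dhi A p with Some q => nu p <= q | None => True end).

Definition cmpR (R : realType) (o : cmp) (a b : R) : bool :=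
  match o with
  | CLt => a < b | CLe => a <= b | CEq => a == b | CGe => b <= a | CGt => b < a
  end.

Definition sg_rhs H Mp (g : sguard H Mp) (nu : 'I_Mp -> rat) : rat :=
  \sum_(i < Mp) (sg_coef g i)%:~R * nu i + (sg_const g)%:~R.

Definition sg_sat (R : realType) H Mp (g : sguard H Mp)
  (v : 'I_H -> R) (nu : 'I_Mp -> rat) : bool :=
  cmpR (sg_op g) (v (sg_clock g)) (ratr (sg_rhs g nu)).

Definition g_sat (R : realType) H Mp (g : guard H Mp)
  (v : 'I_H -> R) (nu : 'I_Mp -> rat) : bool :=
  all (fun s => sg_sat s v nu) g.

Definition delay (R : realType) H (v : 'I_H -> R) (d : R) : 'I_H -> R :=
  fun x => v x + d.

Definition reset (R : realType) H (v : 'I_H -> R) (Rs : {set 'I_H}) : 'I_H -> R :=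
  fun x => if x \in Rs then 0 else v x.

Definition valid (R : realType) H Mp Act Loc (A : pta H Mp Act Loc)
  (nu : 'I_Mp -> rat) (s : Loc * ('I_H -> R)) : Prop :=
  (forall x, 0 <= s.2 x) /\ g_sat (p_inv A s.1) s.2 nu.

Definition ta_step (R : realType) H Mp Act Loc (A : pta H Mp Act Loc)
  (nu : 'I_Mp -> rat) (s s' : Loc * ('I_H -> R)) : Prop :=
  exists (d : R) (e : edge H Mp Act Loc),
    0 <= d /\
    (forall d' : R, 0 <= d' <= d -> valid A nu (s.1, delay s.2 d')) /\
    List.In e (p_edges A) /\ e_src e = s.1 /\
    g_sat (e_guard e) (delay s.2 d) nu /\
    s'.1 = e_dst e /\ (forall x, s'.2 x = reset (delay s.2 d) (e_reset e) x) /\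
    valid A nu s'.

Definition reachable (R : realType) H Mp Act Loc (A : pta H Mp Act Loc)
  (nu : 'I_Mp -> rat) (T : {set Loc}) : Prop :=
  exists (n : nat) (r : nat -> Loc * ('I_H -> R)),
    r 0%N = (p_l0 A, fun _ => 0) /\ valid A nu (r 0%N) /\
    (forall i, (i < n)%N -> ta_step A nu (r i) (r i.+1)) /\
    exists i, (i <= n)%N /\ (r i).1 \in T.

Definition sval (R : realType) H Mp := (('I_H -> R) * ('I_Mp -> rat))%type.
Definition constr (R : realType) H Mp := sval R H Mp -> Prop.
Definition sstate (R : realType) H Mp (Loc : Type) := (Loc * constr R H Mp)%type.

Definition andG (R : realType) H Mp (g : guard H Mp) (C : constr R H Mp)
  : constr R H Mp := fun w => C w /\ g_sat g w.1 w.2.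

Definition tshift (R : realType) H Mp (C : constr R H Mp) : constr R H Mp :=
  fun w => exists (d : R) (v0 : 'I_H -> R),
    0 <= d /\ C (v0, w.2) /\ forall x, w.1 x = v0 x + d.

Definition resetC (R : realType) H Mp (Rs : {set 'I_H}) (C : constr R H Mp)
  : constr R H Mp :=
  fun w => exists v0 : 'I_H -> R, C (v0, w.2) /\ forall x, w.1 x = reset v0 Rs x.

Definition projP (R : realType) H Mp (C : constr R H Mp) : ('I_Mp -> rat) -> Prop :=
  fun nu => exists v : 'I_H -> R, C (v, nu).

Definition s0 (R : realType) H Mp Act Loc (A : pta H Mp Act Loc)
  : sstate R H Mp Loc :=
  (p_l0 A,
   fun w => (exists d : R, 0 <= d /\ forall x, w.1 x = d) /\
            g_sat (p_inv A (p_l0 A)) w.1 w.2 /\ admissible A w.2).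

Definition Succ (R : realType) H Mp Act Loc (A : pta H Mp Act Loc)
  (s : sstate R H Mp Loc) (e : edge H Mp Act Loc) : sstate R H Mp Loc :=
  (e_dst e,
   andG (p_inv A (e_dst e))
     (tshift (andG (p_inv A (e_dst e)) (resetC (e_reset e) (andG (e_guard e) s.2))))).

Definition applicable (R : realType) H Mp Act Loc (A : pta H Mp Act Loc)
  (s : sstate R H Mp Loc) (e : edge H Mp Act Loc) : Prop :=
  e_src e = s.1 /\ exists w, (Succ A s e).2 w.

Definition Cyl (R : realType) H Mp (x : 'I_H) (C : constr R H Mp) : constr R H Mp :=
  fun w => exists w', C w' /\ (forall y, y != x -> w'.1 y = w.1 y) /\
                      (forall p, w'.2 p = w.2 p) /\ 0 <= w.1 x.

Definition Ext (R : realType) H Mp (x : 'I_H) (m : rat) (C : constr R H Mp)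
  : constr R H Mp :=
  fun w => (C w /\ w.1 x <= ratr m) \/
           (Cyl x (fun w' => C w' /\ ratr m < w'.1 x) w /\ ratr m < w.1 x).

Definition ExtX (R : realType) H Mp (Mv : 'I_H -> rat) (C : constr R H Mp)
  : constr R H Mp :=
  foldr (fun x C' => Ext x (Mv x) C') C (enum 'I_H).

Definition ExtS (R : realType) H Mp (Loc : Type) (Mv : 'I_H -> rat)
  (s : sstate R H Mp Loc) : sstate R H Mp Loc := (s.1, ExtX Mv s.2).

Definition maxC H Mp Act Loc (A : pta H Mp Act Loc) (g : sguard H Mp) : rat :=
  \sum_(i < Mp)
     (sg_coef g i)%:~R *
     (if sg_coef g i < 0 then odflt 0 (p_Dlo A i)
      else if 0 < sg_coef g i then odflt 0 (p_Dhi A i) else 0)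
  + (sg_const g)%:~R.

Definition Gx H Mp (Act Loc : finType) (A : pta H Mp Act Loc) (x : 'I_H)
  : seq (sguard H Mp) :=
  [seq g <- flatten ([seq e_guard e | e <- p_edges A] ++
                     [seq p_inv A l | l <- enum Loc])
     | sg_clock g == x].

(* maxC^x(A); convention 0 if x occurs in no guard / invariant *)
Definition maxCx H Mp Act Loc (A : pta H Mp Act Loc) (x : 'I_H) : rat :=
  match Gx A x with
  | [::] => 0
  | g :: gs => foldr (fun g' m => Num.max (maxC A g') m) (maxC A g) gs
  end.

Definition in_pass (R : realType) H Mp (Loc : Type)
  (s : sstate R H Mp Loc) (Pass : seq (sstate R H Mp Loc)) : Prop :=
  exists s', List.In s' Pass /\ s'.1 = s.1 /\ forall w, s'.2 w <-> s.2 w.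

(* EEF A T Phi s Pass K : the call EEF_Phi(A, s, T, Pass) terminates with
   output K.  EEF_edges A T Phi s Pass' es K : the loop over the edge list es
   (with the recursive calls using Pass' = Pass u {s}) terminates with K. *)
Inductive EEF (R : realType) H Mp (Act Loc : finType) (A : pta H Mp Act Loc)
  (T : {set Loc}) (Phi : sstate R H Mp Loc -> sstate R H Mp Loc)
  : sstate R H Mp Loc -> seq (sstate R H Mp Loc) -> (('I_Mp -> rat) -> Prop) -> Prop :=
| EEF_target : forall s Pass,
    s.1 \in T -> EEF A T Phi s Pass (projP s.2)
| EEF_passed : forall s Pass,
    s.1 \notin T -> in_pass s Pass -> EEF A T Phi s Pass (fun _ => False)
| EEF_explore : forall s Pass K,
    s.1 \notin T -> ~ in_pass s Pass ->
    EEF_edges A T Phi s (s :: Pass) (p_edges A) K ->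
    EEF A T Phi s Pass K
with EEF_edges (R : realType) H Mp (Act Loc : finType) (A : pta H Mp Act Loc)
  (T : {set Loc}) (Phi : sstate R H Mp Loc -> sstate R H Mp Loc)
  : sstate R H Mp Loc -> seq (sstate R H Mp Loc) -> seq (edge H Mp Act Loc) ->
    (('I_Mp -> rat) -> Prop) -> Prop :=
| EE_nil : forall s Pass, EEF_edges A T Phi s Pass [::] (fun _ => False)
| EE_skip : forall s Pass e es K,
    ~ applicable A s e -> EEF_edges A T Phi s Pass es K ->
    EEF_edges A T Phi s Pass (e :: es) K
| EE_step : forall s Pass e es K1 K2,
    applicable A s e ->
    EEF A T Phi (Phi (Succ A s e)) Pass K1 ->
    EEF_edges A T Phi s Pass es K2 ->
    EEF_edges A T Phi s Pass (e :: es) (fun nu => K1 nu \/ K2 nu).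

From Pilot Require Import Defs.
From HB Require Import structures.
From mathcomp Require Import all_boot all_order all_algebra.
From mathcomp Require Import reals lra.
From Stdlib Require Import Classical FunctionalExtensionality.

Set Implicit Arguments.
Unset Strict Implicit.
Unset Printing Implicit Defensive.
Import Order.TTheory GRing.Theory Num.Theory.
Local Open Scope ring_scope.

(* Soundness: call two clock valuations M-equivalent when every clock either
   agrees or exceeds M(x) in both.  For admissible parameters no guard or
   invariant of A can tell M-equivalent valuations apart when M = maxC^x(A),
   and this is where boundedness is used; since Ext only adds valuations that
   are M-equivalent to old ones, every point of an explored symbolic state is
   M-equivalent to a concretely reachable valuation with the same parameters.

   Completeness: Ext only enlarges states.  Follow a shortest run to T; along
   the depth-first path of EEF the distance to T of the covered concrete state
   decreases strictly, so no state on the path can already be in Pass. *)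

Scheme EEF_mut := Induction for EEF Sort Prop
  with EEF_edges_mut := Induction for EEF_edges Sort Prop.

Lemma In_of_mem (T : eqType) (x : T) s : x \in s -> List.In x s.
Proof. by elim: s => //= y s IH; rewrite in_cons => /orP [/eqP ->|/IH]; auto. Qed.

Lemma exists_least (P : nat -> Prop) m : P m ->
  exists m0, (m0 <= m)%N /\ (P m0 /\ forall k, (k < m0)%N -> ~ P k).
Proof.
elim/ltn_ind: m => m IH Pm.
have [[k [ltkm Pk]]|no_less] := classic (exists k, (k < m)%N /\ P k).
  have [m0 [lem0k least]] := IH k ltkm Pk.
  by exists m0; split=> //; apply: leq_trans lem0k (ltnW ltkm).
by exists m; split=> //; split=> // k ltkm Pk; apply: no_less; exists k.
Qed.

Lemma le_foldr_max (T : Type) (F : realDomainType) (f : T -> F) x0 xs x :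
  List.In x (x0 :: xs) -> f x <= foldr (fun y m => Num.max (f y) m) (f x0) xs.
Proof.
elim: xs => [|y xs IH] /=; first by case=> [->|[]].
rewrite le_max => -[x0x|[yx|x_in]]; first by rewrite IH ?orbT //; left.
  by rewrite yx lexx.
by rewrite IH ?orbT //; right.
Qed.

Section ClockComparisons.
Variable R : realType.

Lemma cmpR_delay_convex o (a c d d' : R) :
  cmpR o a c -> cmpR o (a + d) c -> 0 <= d' <= d -> cmpR o (a + d') c.
Proof. by case: o => /= h1 h2 /andP[]; lra. Qed.

Lemma cmpR_above o (a b c r : R) :
  c <= r -> r < a -> r < b -> cmpR o a c = cmpR o b c.
Proof.
move=> cr ra rb; have ca := le_lt_trans cr ra; have cb := le_lt_trans cr rb.
by case: o => /=; rewrite ?(lt_geF ca, lt_geF cb, lt_gtF ca, lt_gtF cb,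
  gt_eqF ca, gt_eqF cb, ltW ca, ltW cb, ca, cb).
Qed.

Lemma g_sat_delay_convex H Mp (g : guard H Mp) (v : 'I_H -> R) nu d d' :
  g_sat g v nu -> g_sat g (delay v d) nu -> 0 <= d' <= d ->
  g_sat g (delay v d') nu.
Proof.
elim: g => //= s g IH /andP[s_v g_v] /andP[s_vd g_vd] dd.
by apply/andP; split; [exact: cmpR_delay_convex s_v s_vd dd|exact: IH].
Qed.

Lemma delay0 H (v : 'I_H -> R) : delay v 0 = v.
Proof. by apply: functional_extensionality => x; rewrite /delay addr0. Qed.

End ClockComparisons.

Section Equivalence.
Variables (R : realType) (H : nat) (M : 'I_H -> rat).

Definition equivM (v w : 'I_H -> R) :=
  forall x, v x = w x \/ (ratr (M x) < v x /\ ratr (M x) < w x).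

Lemma equivM_refl v : equivM v v.
Proof. by move=> x; left. Qed.

Lemma equivM_trans u v w : equivM u v -> equivM v w -> equivM u w.
Proof.
move=> uv vw x; case: (uv x) => [->|[Mu Mv]]; first exact: vw.
by case: (vw x) => [<-|[_ Mw]]; right.
Qed.

Lemma equivM_delay v w d : 0 <= d -> equivM v w -> equivM (delay v d) (delay w d).
Proof.
move=> d_ge0 vw x; rewrite /delay.
by case: (vw x) => [->|[Mv Mw]]; [left|right; split; lra].
Qed.

Lemma equivM_reset v w (Rs : {set 'I_H}) :
  equivM v w -> equivM (reset v Rs) (reset w Rs).
Proof. by move=> vw x; rewrite /reset; case: (x \in Rs); [left|apply: vw]. Qed.

Lemma g_sat_equivM Mp (g : guard H Mp) nu v w :
  (forall s, List.In s g -> sg_rhs s nu <= M (sg_clock s)) -> equivM v w ->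
  g_sat g v nu = g_sat g w nu.
Proof.
move=> le_M vw; elim: g le_M => //= s g IH le_M.
rewrite -/(g_sat g v nu) -/(g_sat g w nu) IH; last by move=> t t_g; apply: le_M; right.
congr andb; rewrite /sg_sat.
case: (vw (sg_clock s)) => [->//|[Mv Mw]].
by apply: cmpR_above Mv Mw; rewrite ler_rat; apply: le_M; left.
Qed.

Lemma ExtX_equivM Mp (C : constr R H Mp) w :
  ExtX M C w -> exists v, C (v, w.2) /\ equivM v w.1.
Proof.
rewrite /ExtX; elim: (enum 'I_H) w => [|x xs IH] w /=.
  by case: w => v nu Cw; exists v; split=> //; apply: equivM_refl.
case=> [[/IH //]|[[w' [[/IH [v [Cv vw']] Mw'] [same_clocks [same_pars _]]]] Mw]].
have -> : w.2 = w'.2 by apply: functional_extensionality => p; rewrite same_pars.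
exists v; split=> //; apply: equivM_trans vw' _ => y.
by have [->|yx] := eqVneq y x; [right|left; apply: same_clocks].
Qed.

Lemma ExtX_sub Mp (C : constr R H Mp) w :
  (forall x, 0 <= w.1 x) -> C w -> ExtX M C w.
Proof.
move=> w_ge0 Cw; rewrite /ExtX; elim: (enum 'I_H) => //= x xs IH.
have [le|lt] := leP (w.1 x) (ratr (M x)); first by left.
by right; split=> //; exists w.
Qed.

End Equivalence.

Lemma ExtS_sub (R : realType) H Mp (Loc : Type) (M : 'I_H -> rat)
    (S : sstate R H Mp Loc) w :
  (forall x, 0 <= w.1 x) -> S.2 w -> (ExtS M S).2 w.
Proof. exact: ExtX_sub. Qed.

Section Bounds.
Variables (H Mp : nat) (Act Loc : finType) (A : pta H Mp Act Loc).

Lemma sg_rhs_le_maxC g nu :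
  bounded A -> admissible A nu -> sg_rhs g nu <= Defs.maxC A g.
Proof.
move=> bA adm; rewrite /sg_rhs /Defs.maxC lerD2r; apply: ler_sum => i _.
case: (bA i) (adm i) => {adm}.
case: (p_Dlo A i) => [lo|//] _; case: (p_Dhi A i) => [hi|//] _ /= [lo_nu nu_hi].
have [c_lt0|c_ge0] := ltP (sg_coef g i) 0.
  have : (sg_coef g i)%:~R < 0 :> rat by rewrite ltrz0.
  by nra.
have [c_gt0|c_le0] := ltP 0 (sg_coef g i).
  have : 0 < (sg_coef g i)%:~R :> rat by rewrite ltr0z.
  by nra.
have -> : sg_coef g i = 0 by apply/eqP; rewrite eq_le c_le0 c_ge0.
by rewrite mulr0z !mul0r.
Qed.

Lemma maxC_le_maxCx x g : List.In g (Gx A x) -> Defs.maxC A g <= maxCx A x.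
Proof. by rewrite /maxCx; case: (Gx A x) => [//|g0 gs]; apply: le_foldr_max. Qed.

Definition guard_of (g : guard H Mp) :=
  forall s, List.In s g -> List.In s (Gx A (sg_clock s)).

Lemma guard_of_guards g :
  List.In g ([seq e_guard e | e <- p_edges A] ++ [seq p_inv A l | l <- enum Loc]) ->
  guard_of g.
Proof.
move=> g_A s s_g; apply/List.filter_In; split; last exact: eqxx.
by apply/List.in_concat; exists g.
Qed.

Lemma guard_of_inv l : guard_of (p_inv A l).
Proof.
apply/guard_of_guards/List.in_or_app; right.
by apply/List.in_map/In_of_mem; rewrite mem_enum.
Qed.

Lemma guard_of_edge e : List.In e (p_edges A) -> guard_of (e_guard e).
Proof. by move=> e_A; apply/guard_of_guards/List.in_or_app; left; apply: List.in_map. Qed.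

Lemma g_sat_maxCx_equiv (R : realType) g nu (v w : 'I_H -> R) :
  bounded A -> admissible A nu -> guard_of g -> equivM (maxCx A) v w ->
  g_sat g v nu = g_sat g w nu.
Proof.
move=> bA adm g_A; apply: g_sat_equivM => s s_g.
exact: le_trans (sg_rhs_le_maxC s bA adm) (maxC_le_maxCx (g_A s s_g)).
Qed.

End Bounds.

Arguments guard_of_inv {H Mp Act Loc A} l.
Arguments guard_of_edge {H Mp Act Loc A} e.

Section Runs.
Variables (R : realType) (H Mp : nat) (Act Loc : finType) (A : pta H Mp Act Loc).
Variable nu : 'I_Mp -> rat.

Definition delay_ok (c : Loc * ('I_H -> R)) (d : R) :=
  0 <= d /\ forall d', 0 <= d' <= d -> valid A nu (c.1, delay c.2 d').

Lemma delay_ok_valid c d : delay_ok c d -> valid A nu c.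
Proof.
by case=> d_ge0 ok; have := ok 0; rewrite lexx d_ge0 delay0; case: c {ok} => l v; apply.
Qed.

Lemma delay_ok_end c d : delay_ok c d -> valid A nu (c.1, delay c.2 d).
Proof. by case=> d_ge0 ok; apply: ok; rewrite lexx d_ge0. Qed.

Lemma delay_ok0 c : valid A nu c -> delay_ok c 0.
Proof.
move=> c_valid; split=> // d' d'0; have -> : d' = 0 by apply/eqP; rewrite eq_le andbC.
by rewrite delay0; case: c c_valid.
Qed.

Definition init_state : Loc * ('I_H -> R) := (p_l0 A, fun _ => 0).

Definition run_to (c : Loc * ('I_H -> R)) :=
  exists n (r : nat -> Loc * ('I_H -> R)),
    r 0%N = init_state /\ valid A nu (r 0%N) /\
    (forall i, (i < n)%N -> ta_step A nu (r i) (r i.+1)) /\ r n = c.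

Lemma run_to_init : valid A nu init_state -> run_to init_state.
Proof. by move=> init_valid; exists 0%N, (fun _ => init_state). Qed.

Lemma run_to_step c c' : run_to c -> ta_step A nu c c' -> run_to c'.
Proof.
move=> [n [r [r0 [r0_valid [r_steps rn]]]]] step.
exists n.+1, (fun i => if (i <= n)%N then r i else c'); rewrite ltnn.
split; first exact: r0; split; first exact: r0_valid.
split=> [i|//]; rewrite ltnS => le_in; rewrite le_in.
have [lt_in|le_ni] := ltnP i n; first exact: r_steps.
have -> : i = n by apply/eqP; rewrite eqn_leq le_in le_ni.
by rewrite rn.
Qed.

Lemma reachable_run_to (T : {set Loc}) c :
  run_to c -> c.1 \in T -> reachable R A nu T.
Proof.
move=> [n [r [r0 [r0_valid [r_steps rn]]]]] cT.
by exists n, r; do 3!split=> //; exists n; rewrite rn.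
Qed.

Definition reached (l : Loc) (v : 'I_H -> R) :=
  exists c d, run_to c /\ c.1 = l /\ delay_ok c d /\ v = delay c.2 d.

Lemma reached_valid l v : reached l v -> valid A nu (l, v).
Proof. by move=> [c [d [_ [<- [/delay_ok_end ok ->]]]]]. Qed.

Lemma reached_edge e u d :
  reached (e_src e) u -> List.In e (p_edges A) -> g_sat (e_guard e) u nu ->
  delay_ok (e_dst e, reset u (e_reset e)) d ->
  reached (e_dst e) (delay (reset u (e_reset e)) d).
Proof.
move=> [c [d0 [run_c [c_src [[d0_ge0 ok0] ->]]]]] e_A guard_ok ok.
exists (e_dst e, reset (delay c.2 d0) (e_reset e)), d; split; last by [].
apply: run_to_step run_c _; exists d0, e.
do 3!split=> //; split; first by rewrite c_src.
by do 3!split=> //; exact: delay_ok_valid ok.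
Qed.

End Runs.

Section Soundness.
Variables (R : realType) (H Mp : nat) (Act Loc : finType) (A : pta H Mp Act Loc).
Hypothesis bA : bounded A.

Definition sound (S : sstate R H Mp Loc) :=
  forall w, S.2 w ->
    admissible A w.2 /\ exists v, equivM (maxCx A) v w.1 /\ reached A w.2 S.1 v.

Lemma delay_ok_equivM nu l (v w : 'I_H -> R) d :
  admissible A nu -> (forall x, 0 <= v x) -> equivM (maxCx A) v w -> 0 <= d ->
  g_sat (p_inv A l) w nu -> g_sat (p_inv A l) (delay w d) nu ->
  delay_ok A nu (l, v) d.
Proof.
move=> adm v_ge0 vw d_ge0 inv_w inv_wd; split=> // d' /andP[d'_ge0 d'_le] /=.
split=> [x|]; first by rewrite /delay addr_ge0.
rewrite (g_sat_maxCx_equiv bA adm (guard_of_inv l) (equivM_delay d'_ge0 vw)).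
by apply: g_sat_delay_convex inv_w inv_wd _; rewrite d'_ge0.
Qed.

Lemma sound_Succ S e : sound S -> List.In e (p_edges A) -> e_src e = S.1 ->
  sound (ExtS (maxCx A) (Succ A S e)).
Proof.
move=> soundS e_A src_e [w nu] /ExtX_equivM /=.
move=> [v1 [[[d [v0 [d_ge0 [[[u [[Su guard_u] v0E] inv_v0] v1E]]]] inv_v1] v1w]]].
have [adm [u' [u'u reached_u']]] := soundS _ Su; split=> //=.
have {}v0E : v0 = reset u (e_reset e) by apply: functional_extensionality.
have {}v1E : v1 = delay v0 d by apply: functional_extensionality.
subst v0 v1; rewrite -src_e in reached_u'.
have equiv0 := equivM_reset (e_reset e) u'u.
exists (delay (reset u' (e_reset e)) d); split.
  by apply: equivM_trans (equivM_delay d_ge0 equiv0) _.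
apply: reached_edge => //.
  by rewrite (g_sat_maxCx_equiv bA adm (guard_of_edge e e_A) u'u).
apply: delay_ok_equivM equiv0 d_ge0 _ _ => //.
by move=> x; rewrite /reset; case: ifP => // _; exact: (reached_valid reached_u').1.
Qed.

Lemma sound_s0 : (forall nu, admissible A nu -> valid A nu (init_state R A)) ->
  sound (s0 R A).
Proof.
move=> init_valid [v nu] /= [[d [d_ge0 vE]] [inv_v adm]]; split=> //.
have {}vE : v = delay (fun _ => 0) d.
  by apply: functional_extensionality => x; rewrite vE /delay add0r.
exists v; split; first exact: equivM_refl.
have [_ inv_zero] := init_valid nu adm.
exists (init_state R A), d; split; first exact/run_to_init/init_valid.
split=> //; split; last exact: vE.
split=> // d' /andP[d'_ge0 d'_le]; split=> [x|/=].
  by rewrite /delay /= add0r.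
apply: (g_sat_delay_convex (d := d) inv_zero); first by rewrite -vE.
by rewrite d'_ge0.
Qed.

Lemma EEF_sound (T : {set Loc}) s Pass K :
  EEF A T (ExtS (maxCx A)) s Pass K -> sound s ->
  forall nu, K nu -> reachable R A nu T.
Proof.
move: s Pass K; apply: (EEF_mut
  (P := fun s _ K _ => sound s -> forall nu, K nu -> reachable R A nu T)
  (P0 := fun s _ es K _ => sound s ->
           (forall e, List.In e es -> List.In e (p_edges A)) ->
           forall nu, K nu -> reachable R A nu T)).
- move=> s Pass sT sound_s nu [v /sound_s [_ [_ [_ [c [d [run_c [c_s _]]]]]]]].
  by apply: reachable_run_to run_c _; rewrite c_s.
- by [].
- by move=> s Pass K _ _ _ IH sound_s; apply: IH.
- by [].
- move=> s Pass e es K _ _ IH sound_s es_A.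
  by apply: IH => // e' e'_es; apply: es_A; right.
- move=> s Pass e es K1 K2 [src_e _] _ IH1 _ IH2 sound_s es_A nu [K1nu|K2nu].
    by apply: IH1 K1nu; apply: sound_Succ => //; apply: es_A; left.
  by apply: IH2 K2nu => // e' e'_es; apply: es_A; right.
Qed.

End Soundness.

Section Completeness.
Variables (R : realType) (H Mp : nat) (Act Loc : finType) (A : pta H Mp Act Loc).
Variable T : {set Loc}.

Fixpoint reaches_in nu (k : nat) (c : Loc * ('I_H -> R)) : Prop :=
  if k is k'.+1 then exists c', ta_step A nu c c' /\ reaches_in nu k' c'
  else c.1 \in T.

Lemma reaches_in_run nu n (r : nat -> Loc * ('I_H -> R)) i :
  (forall j, (j < n)%N -> ta_step A nu (r j) (r j.+1)) -> (i <= n)%N ->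
  (r i).1 \in T -> forall k j, (j + k)%N = i -> reaches_in nu k (r j).
Proof.
move=> steps le_in iT; elim=> [|k IH] j jk /=; first by rewrite -jk addn0 in iT.
exists (r j.+1); split; last by apply: IH; rewrite addSnnS.
by apply: steps; apply: leq_trans _ le_in; rewrite -jk -addSnnS leq_addr.
Qed.

Lemma reachable_reaches_in nu :
  reachable R A nu T -> exists m, reaches_in nu m (init_state R A).
Proof.
move=> [n [r [r0 [_ [steps [i [le_in iT]]]]]]].
have -> : init_state R A = r 0%N by rewrite r0.
by exists i; apply: reaches_in_run steps le_in iT _ _ (add0n i).
Qed.

Definition covers (S : sstate R H Mp Loc) nu (c : Loc * ('I_H -> R)) :=
  S.1 = c.1 /\ forall d, delay_ok A nu c d -> S.2 (delay c.2 d, nu).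

Definition reaches_from S nu m :=
  exists c, valid A nu c /\ covers S nu c /\ reaches_in nu m c.

Lemma reaches_from_s0 nu m :
  admissible A nu -> valid A nu (init_state R A) ->
  reaches_in nu m (init_state R A) -> reaches_from (s0 R A) nu m.
Proof.
move=> adm init_valid reach; exists (init_state R A); split=> //; split=> //.
split=> // d ok; split; last by split=> //; have [] := delay_ok_end ok.
by exists d; split=> [|x]; [case: ok|rewrite /delay /= add0r].
Qed.

Definition step_along nu e (c c' : Loc * ('I_H -> R)) :=
  exists d, 0 <= d /\
    (forall d', 0 <= d' <= d -> valid A nu (c.1, delay c.2 d')) /\
    List.In e (p_edges A) /\ e_src e = c.1 /\
    g_sat (e_guard e) (delay c.2 d) nu /\
    c'.1 = e_dst e /\ (forall x, c'.2 x = reset (delay c.2 d) (e_reset e) x) /\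
    valid A nu c'.

Lemma ta_step_along nu c c' : ta_step A nu c c' -> exists e, step_along nu e c c'.
Proof. by case=> d [e step]; exists e, d. Qed.

Lemma Succ_covers S nu e c c' d :
  covers S nu c -> step_along nu e c c' -> delay_ok A nu c' d ->
  (Succ A S e).2 (delay c'.2 d, nu).
Proof.
move=> [_ S_c] [d0 [d0_ge0 [ok0 [_ [_ [guard_ok [c'_dst [c'E _]]]]]]]] ok.
split; last by rewrite -c'_dst; case: (delay_ok_end ok).
exists d, c'.2; split; first by case: ok.
split=> //; split; last by rewrite -c'_dst; case: (delay_ok_valid ok).
by exists (delay c.2 d0); split=> //; split=> //; apply: S_c.
Qed.

Variable Phi : sstate R H Mp Loc -> sstate R H Mp Loc.
Hypothesis Phi_loc : forall S, (Phi S).1 = S.1.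
Hypothesis Phi_sub : forall S w, (forall x, 0 <= w.1 x) -> S.2 w -> (Phi S).2 w.

Lemma covers_Phi_Succ S nu e c c' :
  covers S nu c -> step_along nu e c c' -> covers (Phi (Succ A S e)) nu c'.
Proof.
move=> S_c step; split.
  by rewrite Phi_loc; case: step => d [_ [_ [_ [_ [_ [-> _]]]]]].
move=> d ok; apply: Phi_sub (Succ_covers S_c step ok).
by case: (delay_ok_end ok).
Qed.

Definition least_reach S nu m :=
  reaches_from S nu m /\ forall k, (k < m)%N -> ~ reaches_from S nu k.

Definition none_within (Pass : seq (sstate R H Mp Loc)) nu m :=
  forall P, List.In P Pass -> forall k, (k <= m)%N -> ~ reaches_from P nu k.

Lemma EEF_complete s Pass K : EEF A T Phi s Pass K ->
  forall nu m, least_reach s nu m -> none_within Pass nu m -> K nu.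
Proof.
move: s Pass K; apply: (EEF_mut
  (P := fun s Pass K _ => forall nu m,
          least_reach s nu m -> none_within Pass nu m -> K nu)
  (P0 := fun s Pass es K _ => forall nu c c' e m,
          valid A nu c -> covers s nu c -> List.In e es -> step_along nu e c c' ->
          reaches_in nu m c' -> none_within Pass nu m -> K nu)).
- move=> s Pass _ nu m [[c [c_valid [[_ S_c] _]]] _] _.
  by exists c.2; rewrite -(delay0 c.2); apply/S_c/delay_ok0.
- move=> s Pass _ [s' [s'_Pass [s'_loc s'_eq]]] nu m.
  move=> [[c [c_valid [[s_c S_c] reach]]] _] far.
  apply: (far s' s'_Pass m (leqnn m)); exists c; split=> //; split=> //.
  by split=> [|d ok]; [rewrite s'_loc|apply/s'_eq/S_c].
- move=> s Pass K sT _ _ IH nu [|m] [[c [c_valid [c_cov reach]]] least] far /=.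
    by case: c_cov sT => -> _; rewrite reach.
  have [c' [step reach']] := reach; have [e step_e] := ta_step_along step.
  have e_A : List.In e (p_edges A) by case: step_e => d [_ [_ [? _]]].
  apply: IH c_valid c_cov e_A step_e reach' _ => P [<-|P_Pass] k le_km.
    exact: least.
  by apply: far => //; apply: leq_trans le_km (leqnSn m).
- by move=> s Pass nu c c' e m _ _ [].
- move=> s Pass e es K not_app _ IH nu c c' e' m c_valid c_cov [<-|e'_es] step;
    last exact: IH c_valid c_cov e'_es step.
  move=> _ _; have [d [_ [_ [_ [src_e [_ [_ [_ c'_valid]]]]]]]] := step.
  exfalso; apply: not_app; split; first by rewrite src_e; case: c_cov.
  by exists (delay c'.2 0, nu); apply: Succ_covers c_cov step (delay_ok0 c'_valid).
- move=> s Pass e es K1 K2 _ _ IH1 _ IH2 nu c c' e' m c_valid c_cov.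
  case=> [<-|e'_es] step reach far; last by right; exact: IH2 c_valid c_cov e'_es step reach far.
  left; have c'_valid : valid A nu c' by case: step => d [_ [_ [_ [_ [_ [_ [_ ?]]]]]]].
  have reach_succ : reaches_from (Phi (Succ A s e)) nu m.
    by exists c'; split=> //; split=> //; apply: covers_Phi_Succ c_cov step.
  have [m0 [le_m0 least0]] := exists_least reach_succ.
  apply: IH1 least0 _ => P P_Pass k le_k.
  by apply: far => //; apply: leq_trans le_k le_m0.
Qed.

End Completeness.

Theorem proposition1 (R : realType) (H Mp : nat) (Act Loc : finType)
  (A : pta H Mp Act Loc) (T : {set Loc}) (K : ('I_Mp -> rat) -> Prop) :
  bounded A ->
  (* well-formedness of nu(A): the initial state (l0, 0) is a state *)
  (forall nu, admissible A nu -> valid A nu (p_l0 A, fun _ => 0%R : R)) ->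
  EEF A T (@ExtS R H Mp Loc (maxCx A)) (s0 R A) [::] K ->
  (forall nu, K nu -> reachable R A nu T) /\
  (forall nu, admissible A nu -> reachable R A nu T -> K nu).
Proof.
move=> bA init_valid run; split=> nu.
  exact: (EEF_sound bA run (sound_s0 init_valid)).
move=> adm /reachable_reaches_in [m reach].
have [m0 [_ least]] := exists_least (reaches_from_s0 adm (init_valid nu adm) reach).
apply: (EEF_complete (Phi := ExtS (maxCx A)) (fun _ => erefl) (ExtS_sub (maxCx A)) run least).
by move=> P [].
Qed.
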